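(* Let $v_0\in\mathbb{R}^n$ be a unit vector, $\tau>0$, $\epsilon\ge 0$, and let $\mathbf{A}$ be any $n\times n\times n$ tensor with slices $A_i\in\mathbb{R}^{n\times n}$, $(A_i)_{jk}=\mathbf{A}_{ijk}$. Let $\mathbf{T}=\tau v_0^{\otimes 3}+\mathbf{A}$ with slices $T_i$. Let $w\in\mathbb{R}^{n^2}$ be the vector flattening of $\mathrm{Id}_{n\times n}$ (so $w_{(j,k)}=\delta_{jk}$). Suppose $\|\sum_i A_i\otimes A_i-n\,ww^T\|\le \epsilon\tau^2$ and $\|\sum_i v_0(i)A_i\|\le \epsilon\tau$. Then any top left or right singular vector $v'$ of $M:=\sum_i T_i\otimes T_i-n\,ww^T$ satisfies $\langle v',v_0\otimes v_0\rangle^2\ge 1-O(\epsilon)$.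
   Context: Norms of matrices are operator norms. The Kronecker product $A\otimes B$ is indexed by pairs: $(A\otimes B)[(j,k),(j',k')]=A_{jj'}B_{kk'}$. Note $n\,ww^T=\mathbb{E}\sum_i A_i\otimes A_i$ when $\mathbf{A}$ has i.i.d. standard Gaussian entries. *)

(* Vectors are functions on finite index types; an
   n^2 x n^2 matrix is a function on pairs ('I_n * 'I_n), which matches the
   pair-indexing convention of the Kronecker product in the paper. *)
From HB Require Import structures.
From mathcomp Require Import all_boot all_order all_algebra.
Set Implicit Arguments. Unset Strict Implicit. Unset Printing Implicit Defensive.
Import Order.TTheory GRing.Theory Num.Theory.
Local Open Scope ring_scope.

Section Defs.
Variable R : rcfType.

Definition sqnorm (I : finType) (x : I -> R) : R := \sum_(i : I) x i ^+ 2.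

Definition mvmul (I J : finType) (X : I -> J -> R) (x : J -> R) : I -> R :=
  fun i => \sum_(j : J) X i j * x j.

Definition trans (I J : finType) (X : I -> J -> R) : J -> I -> R :=
  fun j i => X i j.

(* operator norm of X is at most c (c >= 0): ||X x|| <= c ||x|| for all x,
   written with squares *)
Definition opnorm_le (I J : finType) (X : I -> J -> R) (c : R) : Prop :=
  forall x : J -> R, sqnorm (mvmul X x) <= c ^+ 2 * sqnorm x.

Definition top_right_sv (I J : finType) (X : I -> J -> R) (v : J -> R) : Prop :=
  sqnorm v = 1 /\ forall x : J -> R, sqnorm (mvmul X x) <= sqnorm (mvmul X v) * sqnorm x.

Definition top_left_sv (I J : finType) (X : I -> J -> R) (u : I -> R) : Prop :=
  top_right_sv (trans X) u.

Definition slice n (A : 'I_n -> 'I_n -> 'I_n -> R) (i : 'I_n) : 'M[R]_n :=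
  \matrix_(j, k) A i j k.

Definition kron n (A B : 'M[R]_n) : ('I_n * 'I_n) -> ('I_n * 'I_n) -> R :=
  fun p q => A p.1 q.1 * B p.2 q.2.

Definition wId n : ('I_n * 'I_n) -> R := fun p => if p.1 == p.2 then 1 else 0.

Definition spiked n (tau : R) (v0 : 'I_n -> R) (A : 'I_n -> 'I_n -> 'I_n -> R) :
  'I_n -> 'I_n -> 'I_n -> R :=
  fun i j k => tau * v0 i * v0 j * v0 k + A i j k.

Definition kronSumCentered n (T : 'I_n -> 'I_n -> 'I_n -> R) :
  ('I_n * 'I_n) -> ('I_n * 'I_n) -> R :=
  fun p q => \sum_(i < n) kron (slice T i) (slice T i) p q - n%:R * wId p * wId q.

Definition vtens n (v : 'I_n -> R) : ('I_n * 'I_n) -> R := fun p => v p.1 * v p.2.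

Definition vcontract n (v : 'I_n -> R) (A : 'I_n -> 'I_n -> 'I_n -> R) : 'M[R]_n :=
  \sum_(i < n) v i *: slice A i.

Definition inner (I : finType) (x y : I -> R) : R := \sum_(i : I) x i * y i.

End Defs.

(* The centered flattening is a rank-one spike plus noise:
     sum_i T_i (x) T_i - n w w^T = tau^2 (v0 (x) v0)(v0 (x) v0)^T + N,
   where N = tau (v0 v0^T (x) B + B (x) v0 v0^T) + (sum_i A_i (x) A_i - n w w^T)
   with B = sum_i v0(i) A_i.  Since a Kronecker product with a rank-one
   projection does not increase the operator norm, the hypotheses give
   ||N|| <= 3 eps tau^2.  For any matrix k u u^T + N with ||N|| <= delta k and
   |u| = 1, a top singular vector v satisfies k - ||N|| <= ||M v|| <=
   k |<v, u>| + ||N||, hence |<v, u>| >= 1 - 2 delta and <v, u>^2 >= 1 - 4 delta. *)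

From mathcomp Require Import all_boot all_order all_algebra.
From mathcomp Require Import ring lra.
Import Order.TTheory GRing.Theory Num.Theory.
Local Open Scope ring_scope.
Set Implicit Arguments. Unset Strict Implicit.

Lemma le_of_mul_self_le (R : realDomainType) (z r : R) :
  0 <= z -> 0 <= r -> z * z <= z * r -> z <= r.
Proof. by move=> *; nra. Qed.

Lemma sqr_ge_of_ge_1_sub (R : realDomainType) (b c : R) :
  0 <= b -> 1 - c <= b -> 1 - 2 * c <= b ^+ 2.
Proof. by move=> *; nra. Qed.

Section Euclidean.
Variable R : rcfType.
Implicit Types (I J : finType).

Definition vnorm I (x : I -> R) : R := Num.sqrt (sqnorm x).

Lemma sqnorm_ge0 I (x : I -> R) : 0 <= sqnorm x.
Proof. by apply: sumr_ge0 => i _; rewrite sqr_ge0. Qed.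

Lemma vnorm_ge0 I (x : I -> R) : 0 <= vnorm x.
Proof. exact: sqrtr_ge0. Qed.

Lemma sqr_vnorm I (x : I -> R) : vnorm x ^+ 2 = sqnorm x.
Proof. by rewrite sqr_sqrtr // sqnorm_ge0. Qed.

Lemma vnorm_unit I (x : I -> R) : sqnorm x = 1 -> vnorm x = 1.
Proof. by rewrite /vnorm => ->; rewrite sqrtr1. Qed.

Lemma eq_sqnorm I (x y : I -> R) : x =1 y -> sqnorm x = sqnorm y.
Proof. by move=> exy; apply: eq_bigr => i _; rewrite exy. Qed.

Lemma inner_self I (x : I -> R) : inner x x = sqnorm x.
Proof. by apply: eq_bigr => i _; rewrite expr2. Qed.

Lemma innerC I (x y : I -> R) : inner x y = inner y x.
Proof. by apply: eq_bigr => i _; rewrite mulrC. Qed.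

Lemma inner_sqr_le I (x y : I -> R) : inner x y ^+ 2 <= sqnorm x * sqnorm y.
Proof.
set X := sqnorm x; set Y := sqnorm y; set P := inner x y.
have expand : \sum_i (X * y i - P * x i) ^+ 2 = X * (X * Y - P ^+ 2).
  rewrite (eq_bigr (fun i => X ^+ 2 * y i ^+ 2 - (2 * X * P) * (x i * y i)
                             + P ^+ 2 * x i ^+ 2)); last by move=> i _; ring.
  rewrite big_split sumrB /= -!mulr_sumr.
  change (X ^+ 2 * Y - 2 * X * P * P + P ^+ 2 * X = X * (X * Y - P ^+ 2)); ring.
have [X0|Xneq0] := eqVneq X 0.
  have x0 i : x i = 0.
    by apply/eqP; rewrite -sqrf_eq0; apply/eqP/(psumr_eq0P _ X0) => // j _; rewrite sqr_ge0.
  have -> : P = 0 by rewrite /P /inner big1 // => i _; rewrite x0 mul0r.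
  by rewrite X0 expr0n mul0r.
have X_gt0 : 0 < X by rewrite lt_def Xneq0 sqnorm_ge0.
rewrite -subr_ge0 -(pmulr_rge0 _ X_gt0) -expand.
by apply: sumr_ge0 => i _; rewrite sqr_ge0.
Qed.

Lemma normr_inner_le I (x y : I -> R) : `|inner x y| <= vnorm x * vnorm y.
Proof.
rewrite -sqrtr_sqr /vnorm -sqrtrM ?sqnorm_ge0 //.
by rewrite ler_sqrt ?inner_sqr_le // mulr_ge0 ?sqnorm_ge0.
Qed.

Lemma vnormD_le I (x y : I -> R) : vnorm (fun i => x i + y i) <= vnorm x + vnorm y.
Proof.
have expand : sqnorm (fun i => x i + y i) = sqnorm x + 2 * inner x y + sqnorm y.
  rewrite /sqnorm /inner mulr_sumr -!big_split; apply: eq_bigr => i _ /=; ring.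
rewrite {1}/vnorm expand -[X in _ <= X]ger0_norm ?addr_ge0 ?vnorm_ge0 //.
rewrite -sqrtr_sqr ler_sqrt ?sqr_ge0 //.
rewrite sqrrD !sqr_vnorm lerD2r lerD2l.
have := normr_inner_le x y; have := ler_norm (inner x y); lra.
Qed.

End Euclidean.

Section OperatorNorm.
Variable R : rcfType.
Implicit Types (I J : finType).

Lemma opnorm_leP I J (X : I -> J -> R) c :
  0 <= c -> opnorm_le X c <-> forall x, vnorm (mvmul X x) <= c * vnorm x.
Proof.
move=> c0; split=> hX x.
- by rewrite -ler_sqr ?nnegrE ?mulr_ge0 ?vnorm_ge0 // exprMn !sqr_vnorm.
- by rewrite -!sqr_vnorm -exprMn ler_sqr ?nnegrE ?mulr_ge0 ?vnorm_ge0.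
Qed.

Lemma normr_inner_mvmul_le I J (X : I -> J -> R) c y x :
  0 <= c -> opnorm_le X c -> `|inner y (mvmul X x)| <= c * vnorm y * vnorm x.
Proof.
move=> c0 /(opnorm_leP _ c0) hX; apply: le_trans (normr_inner_le _ _) _.
by rewrite mulrAC [X in X <= _]mulrC ler_wpM2r ?vnorm_ge0.
Qed.

Lemma opnorm_leD I J (X Y : I -> J -> R) a b : 0 <= a -> 0 <= b ->
  opnorm_le X a -> opnorm_le Y b -> opnorm_le (fun i j => X i j + Y i j) (a + b).
Proof.
move=> a0 b0 /(opnorm_leP _ a0) hX /(opnorm_leP _ b0) hY.
apply/opnorm_leP => [|x]; first exact: addr_ge0.
have -> : vnorm (mvmul (fun i j => X i j + Y i j) x) =
          vnorm (fun i => mvmul X x i + mvmul Y x i).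
  rewrite /vnorm (eq_sqnorm (y := fun i => mvmul X x i + mvmul Y x i)) // => i.
  by rewrite /mvmul -big_split; apply: eq_bigr => j _; rewrite mulrDl.
by rewrite mulrDl (le_trans (vnormD_le _ _)) // lerD.
Qed.

Lemma opnorm_leZ I J (X : I -> J -> R) a c :
  0 <= a -> opnorm_le X c -> opnorm_le (fun i j => a * X i j) (a * c).
Proof.
move=> a0 hX x; have -> : sqnorm (mvmul (fun i j => a * X i j) x) =
                         a ^+ 2 * sqnorm (mvmul X x).
  rewrite /sqnorm mulr_sumr; apply: eq_bigr => i _.
  by rewrite /mvmul -exprMn mulr_sumr; congr (_ ^+ 2); apply: eq_bigr => j _; rewrite mulrA.
by apply: le_trans (ler_wpM2l (sqr_ge0 a) (hX x)) _; rewrite exprMn mulrA.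
Qed.

Lemma inner_mvmul_trans I J (X : I -> J -> R) y x :
  inner (mvmul (trans X) y) x = inner y (mvmul X x).
Proof.
rewrite /inner /mvmul /trans; under eq_bigr => j _ do rewrite mulr_suml.
rewrite exchange_big; apply: eq_bigr => i _; rewrite mulr_sumr.
by apply: eq_bigr => j _; rewrite mulrAC mulrC mulrA.
Qed.

Lemma opnorm_le_trans I J (X : I -> J -> R) c :
  0 <= c -> opnorm_le X c -> opnorm_le (trans X) c.
Proof.
move=> c0 /(opnorm_leP _ c0) hX; apply/(opnorm_leP _ c0) => y.
set z := mvmul (trans X) y.
apply: le_of_mul_self_le; rewrite ?mulr_ge0 ?vnorm_ge0 //.
rewrite -expr2 sqr_vnorm -inner_self [X in X <= _](inner_mvmul_trans X y z).
apply: le_trans (ler_norm _) _; apply: le_trans (normr_inner_le _ _) _.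
have -> : vnorm z * (c * vnorm y) = vnorm y * (c * vnorm z) by ring.
by rewrite ler_wpM2l ?vnorm_ge0 ?hX.
Qed.

End OperatorNorm.

Section RankOnePerturbation.
Variables (R : rcfType) (I : finType).
Implicit Types (X N : I -> I -> R) (u v y x : I -> R) (k delta : R).

Lemma inner_mvmul_rank1 X N u k y x :
  (forall i j, X i j = k * u i * u j + N i j) ->
  inner y (mvmul X x) = k * inner y u * inner u x + inner y (mvmul N x).
Proof.
move=> XE; have Xx i : mvmul X x i = k * u i * inner u x + mvmul N x i.
  rewrite /mvmul /inner mulr_sumr -big_split; apply: eq_bigr => j _ /=.
  by rewrite XE; ring.
rewrite {1}/inner (eq_bigr (fun i => k * inner u x * (y i * u i) + y i * mvmul N x i));
  last by move=> i _; rewrite Xx; ring.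
by rewrite big_split /= -mulr_sumr mulrAC.
Qed.

Lemma top_right_sv_rank1_perturb X N u k delta v :
  (forall i j, X i j = k * u i * u j + N i j) ->
  0 < k -> 0 <= delta -> sqnorm u = 1 -> opnorm_le N (delta * k) ->
  top_right_sv X v -> 1 - 2 * delta <= `|inner v u|.
Proof.
move=> XE k_gt0 delta_ge0 u_unit N_small [v_unit v_top].
have d_ge0 : 0 <= delta * k by rewrite mulr_ge0 // ltW.
have u1 := vnorm_unit u_unit; have v1 := vnorm_unit v_unit.
set m := vnorm (mvmul X v).
have m_lb : k - delta * k <= m.
  have Xu_le : vnorm (mvmul X u) <= m.
    by rewrite /m /vnorm ler_sqrt ?sqnorm_ge0 //; have := v_top u; rewrite u_unit mulr1.
  have := normr_inner_le u (mvmul X u).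
  rewrite (inner_mvmul_rank1 _ _ XE) inner_self u_unit u1 !mul1r !mulr1.
  have := normr_inner_mvmul_le u u d_ge0 N_small; rewrite u1 !mulr1.
  move: (ler_norm (- inner u (mvmul N u))) (ler_norm (k + inner u (mvmul N u))).
  rewrite normrN; lra.
have m_ub : m <= k * `|inner v u| + delta * k.
  apply: le_of_mul_self_le; first exact: vnorm_ge0.
    by rewrite addr_ge0 // mulr_ge0 // ltW.
  rewrite -expr2 sqr_vnorm -inner_self (inner_mvmul_rank1 _ _ XE) (innerC u v) mulrDr.
  have := normr_inner_le (mvmul X v) u; rewrite u1 mulr1 -/m.
  have := normr_inner_mvmul_le (mvmul X v) v d_ge0 N_small; rewrite v1 mulr1 -/m.
  have := mulr_ge0 (ltW k_gt0) (normr_ge0 (inner v u)).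
  move: (ler_norm (inner (mvmul X v) (mvmul N v))).
  move: (ler_norm (k * inner (mvmul X v) u * inner v u)).
  rewrite !normrM (gtr0_norm k_gt0); nra.
rewrite -(ler_pM2l k_gt0); nra.
Qed.

Lemma top_left_sv_rank1_perturb X N u k delta v :
  (forall i j, X i j = k * u i * u j + N i j) ->
  0 < k -> 0 <= delta -> sqnorm u = 1 -> opnorm_le N (delta * k) ->
  top_left_sv X v -> 1 - 2 * delta <= `|inner v u|.
Proof.
move=> XE k_gt0 delta_ge0 u_unit N_small.
have XtE i j : trans X i j = k * u i * u j + trans N i j by rewrite /trans XE mulrAC.
apply: (top_right_sv_rank1_perturb XtE) => //.
by apply: opnorm_le_trans; rewrite // mulr_ge0 // ltW.
Qed.

End RankOnePerturbation.

Section KroneckerOuter.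
Variable R : rcfType.
Implicit Types (I J : finType).

Lemma sum_pair I J (F : I * J -> R) : \sum_p F p = \sum_i \sum_j F (i, j).
Proof. by rewrite pair_bigA; apply: eq_bigr => -[]. Qed.

Lemma sqnorm_tens I J (a : I -> R) (b : J -> R) :
  sqnorm (fun p : I * J => a p.1 * b p.2) = sqnorm a * sqnorm b.
Proof. by rewrite /sqnorm big_distrlr pair_bigA; apply: eq_bigr => p _; rewrite exprMn. Qed.

Definition contr_fst I J (v : I -> R) (x : I * J -> R) : J -> R :=
  fun j => inner v (fun i => x (i, j)).

Definition contr_snd I J (v : J -> R) (x : I * J -> R) : I -> R :=
  fun i => inner v (fun j => x (i, j)).

Lemma sqnorm_contr_fst_le I J (v : I -> R) (x : I * J -> R) :
  sqnorm (contr_fst v x) <= sqnorm v * sqnorm x.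
Proof.
rewrite [sqnorm x]/sqnorm sum_pair exchange_big mulr_sumr.
by apply: ler_sum => j _; apply: inner_sqr_le.
Qed.

Lemma sqnorm_contr_snd_le I J (v : J -> R) (x : I * J -> R) :
  sqnorm (contr_snd v x) <= sqnorm v * sqnorm x.
Proof.
rewrite [sqnorm x]/sqnorm sum_pair mulr_sumr.
by apply: ler_sum => i _; apply: inner_sqr_le.
Qed.

Lemma mvmul_kron_outerl I J (v : I -> R) (B : J -> J -> R) x p :
  mvmul (fun p q => v p.1 * v q.1 * B p.2 q.2) x p = v p.1 * mvmul B (contr_fst v x) p.2.
Proof.
rewrite /mvmul /contr_fst /inner sum_pair exchange_big mulr_sumr.
by apply: eq_bigr => l _; rewrite !mulr_sumr; apply: eq_bigr => i _; ring.
Qed.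

Lemma mvmul_kron_outerr I J (v : J -> R) (B : I -> I -> R) x p :
  mvmul (fun p q => B p.1 q.1 * v p.2 * v q.2) x p = mvmul B (contr_snd v x) p.1 * v p.2.
Proof.
rewrite /mvmul /contr_snd /inner sum_pair mulr_suml.
by apply: eq_bigr => i _; rewrite mulr_sumr mulr_suml; apply: eq_bigr => l _; ring.
Qed.

Lemma opnorm_le_kron_outerl I J (v : I -> R) (B : J -> J -> R) c :
  sqnorm v = 1 -> opnorm_le B c ->
  opnorm_le (fun p q => v p.1 * v q.1 * B p.2 q.2) c.
Proof.
move=> v_unit hB x; rewrite (eq_sqnorm (mvmul_kron_outerl v B x)) sqnorm_tens v_unit mul1r.
apply: le_trans (hB _) _; rewrite ler_wpM2l ?sqr_ge0 //.
by have := sqnorm_contr_fst_le v x; rewrite v_unit mul1r.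
Qed.

Lemma opnorm_le_kron_outerr I J (v : J -> R) (B : I -> I -> R) c :
  sqnorm v = 1 -> opnorm_le B c ->
  opnorm_le (fun p q => B p.1 q.1 * v p.2 * v q.2) c.
Proof.
move=> v_unit hB x; rewrite (eq_sqnorm (mvmul_kron_outerr v B x)) sqnorm_tens v_unit mulr1.
apply: le_trans (hB _) _; rewrite ler_wpM2l ?sqr_ge0 //.
by have := sqnorm_contr_snd_le v x; rewrite v_unit mul1r.
Qed.

End KroneckerOuter.

Section SpikedTensor.
Variables (R : rcfType) (n : nat) (tau : R) (v : 'I_n -> R) (A : 'I_n -> 'I_n -> 'I_n -> R).

Definition spike_noise : 'I_n * 'I_n -> 'I_n * 'I_n -> R := fun p q =>
  tau * (v p.1 * v q.1 * vcontract v A p.2 q.2 + vcontract v A p.1 q.1 * v p.2 * v q.2)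
  + kronSumCentered A p q.

Lemma vcontractE j k : vcontract v A j k = \sum_i v i * A i j k.
Proof. by rewrite summxE; apply: eq_bigr => i _; rewrite !mxE. Qed.

Hypothesis v_unit : sqnorm v = 1.

Lemma kronSumCentered_spiked p q :
  kronSumCentered (spiked tau v A) p q =
  tau ^+ 2 * vtens v p * vtens v q + spike_noise p q.
Proof.
rewrite /spike_noise /kronSumCentered /kron /slice /spiked !vcontractE /vtens.
under eq_bigr => i _ do rewrite !mxE.
under [X in _ = _ + (_ + (X - _))]eq_bigr => i _ do rewrite !mxE.
rewrite (eq_bigr (fun i => tau ^+ 2 * (v p.1 * v q.1 * v p.2 * v q.2) * v i ^+ 2 +
   tau * (v p.1 * v q.1) * (v i * A i p.2 q.2) +
   tau * (v p.2 * v q.2) * (v i * A i p.1 q.1) + A i p.1 q.1 * A i p.2 q.2));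
  last by move=> i _; ring.
rewrite !big_split /= -!mulr_sumr -/(sqnorm v) v_unit; ring.
Qed.

Lemma opnorm_le_spike_noise eps : 0 < tau -> 0 <= eps ->
  opnorm_le (kronSumCentered A) (eps * tau ^+ 2) ->
  opnorm_le (fun j k => vcontract v A j k) (eps * tau) ->
  opnorm_le spike_noise (3 * eps * tau ^+ 2).
Proof.
move=> tau_gt0 eps_ge0 hA hB; have tau_ge0 := ltW tau_gt0.
have et_ge0 : 0 <= eps * tau by rewrite mulr_ge0.
have -> : 3 * eps * tau ^+ 2 = tau * (eps * tau + eps * tau) + eps * tau ^+ 2 by ring.
apply: opnorm_leD; rewrite ?mulr_ge0 ?addr_ge0 ?exprn_ge0 //.
apply: opnorm_leZ => //.
by apply: opnorm_leD => //; [apply: opnorm_le_kron_outerl | apply: opnorm_le_kron_outerr].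
Qed.

End SpikedTensor.

Theorem mainTheorem5 (R : rcfType) :
  exists C : R, 0 < C /\
  forall (n : nat) (v0 : 'I_n -> R) (tau eps : R)
         (A : 'I_n -> 'I_n -> 'I_n -> R) (v' : ('I_n * 'I_n) -> R),
    sqnorm v0 = 1 -> 0 < tau -> 0 <= eps ->
    opnorm_le (kronSumCentered A) (eps * tau ^+ 2) ->
    opnorm_le (fun j k => vcontract v0 A j k) (eps * tau) ->
    (top_left_sv (kronSumCentered (spiked tau v0 A)) v' \/
     top_right_sv (kronSumCentered (spiked tau v0 A)) v') ->
    1 - C * eps <= (inner v' (vtens v0)) ^+ 2.
Proof.
exists 12; split=> // n v0 tau eps A v' v0_unit tau_gt0 eps_ge0 hA hB hv'.
have noise_small := opnorm_le_spike_noise v0_unit tau_gt0 eps_ge0 hA hB.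
have spikeE := kronSumCentered_spiked tau A v0_unit.
have u_unit : sqnorm (vtens v0) = 1 by rewrite sqnorm_tens v0_unit mulr1.
have k_gt0 : 0 < tau ^+ 2 by rewrite exprn_gt0.
have delta_ge0 : 0 <= 3 * eps by rewrite mulr_ge0.
have align : 1 - 2 * (3 * eps) <= `|inner v' (vtens v0)|.
  case: hv' => [hl|hr].
  - exact: top_left_sv_rank1_perturb spikeE k_gt0 delta_ge0 u_unit noise_small hl.
  - exact: top_right_sv_rank1_perturb spikeE k_gt0 delta_ge0 u_unit noise_small hr.
have -> : 12 * eps = 2 * (2 * (3 * eps)) by ring.
by rewrite -real_normK ?num_real // sqr_ge_of_ge_1_sub.
Qed.
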